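(* Let $X_1,X_2,X_3,X_4$ be random vectors in a sublinear expectation space. The following are equivalent: (1) $X_1\dashrightarrow X_2\dashrightarrow X_3\dashrightarrow X_4$; (2) $(X_1,X_2)\dashrightarrow(X_3,X_4)$, $X_1\dashrightarrow X_2$ and $X_3\dashrightarrow X_4$.
   Context: Sublinear expectation space $(\Omega,\mathcal H,\hat{\mathbb E})$: $\hat{\mathbb E}$ is monotone, constant-preserving, sub-additive and positively homogeneous (in the paper $\hat{\mathbb E}[X]=\sup_{Q\in\mathcal P}E_Q[X]$). For random vectors $X,Y$, $X\dashrightarrow Y$ means $\hat{\mathbb E}[\varphi(X,Y)]=\hat{\mathbb E}[\hat{\mathbb E}[\varphi(x,Y)]_{x=X}]$ for all bounded Lipschitz $\varphi$; $X_1\dashrightarrow\cdots\dashrightarrow X_n$ means $(X_1,\dots,X_i)\dashrightarrow X_{i+1}$ for $i=1,\dots,n-1$. *)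

From HB Require Import structures.
From mathcomp Require Import all_boot all_order all_algebra.
From mathcomp Require Import reals.
Set Implicit Arguments. Unset Strict Implicit. Unset Printing Implicit Defensive.
Import Order.TTheory GRing.Theory Num.Theory.
Local Open Scope ring_scope.

Definition vnorm (R : realType) (d : nat) (v : 'rV[R]_d) : R :=
  \sum_(i < d) `|v ord0 i|.

Definition bounded_lipschitz (R : realType) (d : nat) (phi : 'rV[R]_d -> R) : Prop :=
  (exists M : R, forall x, `|phi x| <= M) /\
  (exists L : R, forall x y, `|phi x - phi y| <= L * vnorm (x - y)).

(* E is given as a total map on
   Omega -> R, its axioms only concern elements of H. *)
Record sublinear_space (R : realType) (Omega : Type) := SublinearSpace {
  sH : (Omega -> R) -> Prop;
  sE : (Omega -> R) -> R;
  sH_cst : forall c : R, sH (fun _ => c);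
  sH_add : forall X Y, sH X -> sH Y -> sH (fun w => X w + Y w);
  sH_scale : forall (a : R) X, sH X -> sH (fun w => a * X w);
  sH_comp : forall (d : nat) (X : Omega -> 'rV[R]_d) (phi : 'rV[R]_d -> R),
      (forall i : 'I_d, sH (fun w => X w ord0 i)) ->
      bounded_lipschitz phi -> sH (fun w => phi (X w));
  sE_mono : forall X Y, sH X -> sH Y -> (forall w, X w <= Y w) -> sE X <= sE Y;
  sE_cst : forall c : R, sE (fun _ => c) = c;
  sE_subadd : forall X Y, sH X -> sH Y -> sE (fun w => X w + Y w) <= sE X + sE Y;
  sE_poshom : forall (a : R) X, sH X -> 0 <= a -> sE (fun w => a * X w) = a * sE X
}.

Definition random_vector (R : realType) (Omega : Type) (S : sublinear_space R Omega)
  (d : nat) (X : Omega -> 'rV[R]_d) : Prop :=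
  forall i : 'I_d, sH S (fun w => X w ord0 i).

Definition rvpair (R : realType) (Omega : Type) (d1 d2 : nat)
  (X : Omega -> 'rV[R]_d1) (Y : Omega -> 'rV[R]_d2) : Omega -> 'rV[R]_(d1 + d2) :=
  fun w => row_mx (X w) (Y w).

Definition indep (R : realType) (Omega : Type) (S : sublinear_space R Omega)
  (d1 d2 : nat) (X : Omega -> 'rV[R]_d1) (Y : Omega -> 'rV[R]_d2) : Prop :=
  forall phi : 'rV[R]_(d1 + d2) -> R, bounded_lipschitz phi ->
    sE S (fun w => phi (row_mx (X w) (Y w))) =
    sE S (fun w => sE S (fun w' => phi (row_mx (X w) (Y w')))).

Definition indep_chain4 (R : realType) (Omega : Type) (S : sublinear_space R Omega)
  (d1 d2 d3 d4 : nat) (X1 : Omega -> 'rV[R]_d1) (X2 : Omega -> 'rV[R]_d2)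
  (X3 : Omega -> 'rV[R]_d3) (X4 : Omega -> 'rV[R]_d4) : Prop :=
  [/\ indep S X1 X2,
      indep S (rvpair X1 X2) X3 &
      indep S (rvpair (rvpair X1 X2) X3) X4].

From mathcomp Require Import all_boot all_order all_algebra.
From mathcomp Require Import reals.
From mathcomp Require Import boolp.
Import Order.TTheory GRing.Theory Num.Theory.

(* Given the inner independence, each grouping of a chain X --> Y --> Z is
   equivalent to the iterated formula
     E[phi(X,Y,Z)] = E[ E[ E[phi(x,y,Z)]_{y=Y} ]_{x=X} ].
   For (X,Y) --> Z, the inner expectation v |-> E[phi(v,Z)] is again bounded
   Lipschitz, so X --> Y applies to it; for X --> (Y,Z), Y --> Z applies to
   the section z |-> phi(x,z) for each fixed x.  Taking X = (X1,X2), Y = X3,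
   Z = X4, one passes between (X1,X2) --> X3 --> X4 and
   (X1,X2) --> (X3,X4) through this formula; the inner independences
   X3 --> X4 and (X1,X2) --> X3 are obtained from the outer ones by composing
   with Lipschitz projections. *)

Local Open Scope ring_scope.
Set Implicit Arguments. Unset Strict Implicit.

Section Lipschitz.
Variable R : realType.

Lemma vnorm_ge0 d (v : 'rV[R]_d) : 0 <= vnorm v.
Proof. by rewrite /vnorm; apply: sumr_ge0 => i _; exact: normr_ge0. Qed.

Lemma vnorm0 d : vnorm (0 : 'rV[R]_d) = 0.
Proof. by rewrite /vnorm big1 // => i _; rewrite mxE normr0. Qed.

Lemma vnorm_row_mx d1 d2 (a : 'rV[R]_d1) (b : 'rV[R]_d2) :
  vnorm (row_mx a b) = vnorm a + vnorm b.
Proof.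
rewrite /vnorm big_split_ord /=.
by congr (_ + _); apply: eq_bigr => i _; rewrite ?row_mxEl ?row_mxEr.
Qed.

Lemma vnorm_lsubmx d1 d2 (v : 'rV[R]_(d1 + d2)) : vnorm (lsubmx v) <= vnorm v.
Proof. by rewrite -{2}(hsubmxK v) vnorm_row_mx lerDl vnorm_ge0. Qed.

Lemma vnorm_rsubmx d1 d2 (v : 'rV[R]_(d1 + d2)) : vnorm (rsubmx v) <= vnorm v.
Proof. by rewrite -{2}(hsubmxK v) vnorm_row_mx lerDr vnorm_ge0. Qed.

Definition lipschitz_rV d e (f : 'rV[R]_d -> 'rV[R]_e) :=
  exists2 C : R, 0 <= C & forall x y, vnorm (f x - f y) <= C * vnorm (x - y).

Lemma lipschitz_rV_id d : lipschitz_rV (fun x : 'rV[R]_d => x).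
Proof. by exists 1 => // x y; rewrite mul1r. Qed.

Lemma lipschitz_rV_cst d e (c : 'rV[R]_e) : lipschitz_rV (fun _ : 'rV[R]_d => c).
Proof. by exists 0 => // x y; rewrite subrr vnorm0 mul0r. Qed.

Lemma lipschitz_rV_row_mx d e1 e2 (f : 'rV[R]_d -> 'rV[R]_e1)
    (g : 'rV[R]_d -> 'rV[R]_e2) :
  lipschitz_rV f -> lipschitz_rV g -> lipschitz_rV (fun x => row_mx (f x) (g x)).
Proof.
move=> [C1 C1_ge0 Lf] [C2 C2_ge0 Lg]; exists (C1 + C2); first exact: addr_ge0.
move=> x y; rewrite opp_row_mx add_row_mx vnorm_row_mx mulrDl.
exact: lerD.
Qed.

Lemma lipschitz_rV_comp d e k (f : 'rV[R]_e -> 'rV[R]_k) (g : 'rV[R]_d -> 'rV[R]_e) :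
  lipschitz_rV f -> lipschitz_rV g -> lipschitz_rV (fun x => f (g x)).
Proof.
move=> [C1 C1_ge0 Lf] [C2 C2_ge0 Lg]; exists (C1 * C2); first exact: mulr_ge0.
move=> x y; apply: le_trans (Lf _ _) _; rewrite -mulrA; exact: ler_wpM2l.
Qed.

Lemma lipschitz_rV_lsubmx d1 d2 : lipschitz_rV (@lsubmx R 1 d1 d2).
Proof. by exists 1 => // x y; rewrite mul1r -linearB vnorm_lsubmx. Qed.

Lemma lipschitz_rV_rsubmx d1 d2 : lipschitz_rV (@rsubmx R 1 d1 d2).
Proof. by exists 1 => // x y; rewrite mul1r -linearB vnorm_rsubmx. Qed.

Lemma bounded_lipschitz_comp d e (phi : 'rV[R]_e -> R) (f : 'rV[R]_d -> 'rV[R]_e) :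
  bounded_lipschitz phi -> lipschitz_rV f -> bounded_lipschitz (fun x => phi (f x)).
Proof.
move=> [[M phi_bnd] [L phi_lip]] [C C_ge0 Lf]; split; first by exists M.
exists (Num.max L 0 * C) => x y; apply: le_trans (phi_lip _ _) _.
apply: le_trans (_ : Num.max L 0 * vnorm (f x - f y) <= _).
  by apply: ler_wpM2r; [exact: vnorm_ge0 | rewrite le_max lexx].
by rewrite -mulrA; apply: ler_wpM2l; rewrite ?le_max ?lexx ?orbT.
Qed.

Lemma bounded_lipschitz_row_mxl d1 d2 (phi : 'rV[R]_(d1 + d2) -> R) (a : 'rV[R]_d1) :
  bounded_lipschitz phi -> bounded_lipschitz (fun z => phi (row_mx a z)).
Proof.
move=> phi_bl; apply: (bounded_lipschitz_comp phi_bl).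
exact: lipschitz_rV_row_mx (lipschitz_rV_cst _ _) (lipschitz_rV_id _).
Qed.

Definition rV_assoc d1 d2 d3 (v : 'rV[R]_(d1 + (d2 + d3))) : 'rV[R]_(d1 + d2 + d3) :=
  row_mx (row_mx (lsubmx v) (lsubmx (rsubmx v))) (rsubmx (rsubmx v)).

Definition rV_unassoc d1 d2 d3 (v : 'rV[R]_(d1 + d2 + d3)) : 'rV[R]_(d1 + (d2 + d3)) :=
  row_mx (lsubmx (lsubmx v)) (row_mx (rsubmx (lsubmx v)) (rsubmx v)).

Lemma rV_assocE d1 d2 d3 (x : 'rV[R]_d1) (y : 'rV[R]_d2) (z : 'rV[R]_d3) :
  rV_assoc (row_mx x (row_mx y z)) = row_mx (row_mx x y) z.
Proof. by rewrite /rV_assoc !(row_mxKl, row_mxKr). Qed.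

Lemma rV_unassocE d1 d2 d3 (x : 'rV[R]_d1) (y : 'rV[R]_d2) (z : 'rV[R]_d3) :
  rV_unassoc (row_mx (row_mx x y) z) = row_mx x (row_mx y z).
Proof. by rewrite /rV_unassoc !(row_mxKl, row_mxKr). Qed.

Lemma lipschitz_rV_assoc d1 d2 d3 : lipschitz_rV (@rV_assoc d1 d2 d3).
Proof.
apply: lipschitz_rV_row_mx.
  apply: lipschitz_rV_row_mx; first exact: lipschitz_rV_lsubmx.
  exact: lipschitz_rV_comp (lipschitz_rV_lsubmx _ _) (lipschitz_rV_rsubmx _ _).
exact: lipschitz_rV_comp (lipschitz_rV_rsubmx _ _) (lipschitz_rV_rsubmx _ _).
Qed.

Lemma lipschitz_rV_unassoc d1 d2 d3 : lipschitz_rV (@rV_unassoc d1 d2 d3).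
Proof.
apply: lipschitz_rV_row_mx.
  exact: lipschitz_rV_comp (lipschitz_rV_lsubmx _ _) (lipschitz_rV_lsubmx _ _).
apply: lipschitz_rV_row_mx; last exact: lipschitz_rV_rsubmx.
exact: lipschitz_rV_comp (lipschitz_rV_rsubmx _ _) (lipschitz_rV_lsubmx _ _).
Qed.

End Lipschitz.

Section SublinearExpectation.
Variables (R : realType) (Omega : Type) (S : sublinear_space R Omega).

Lemma sE_le_cst (X : Omega -> R) (c : R) :
  sH S X -> (forall w, X w <= c) -> sE S X <= c.
Proof.
by move=> HX le_Xc; rewrite -(sE_cst S c); apply: sE_mono => //; exact: sH_cst.
Qed.

Lemma sE_ge_cst (X : Omega -> R) (c : R) :
  sH S X -> (forall w, c <= X w) -> c <= sE S X.
Proof.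
by move=> HX le_cX; rewrite -(sE_cst S c); apply: sE_mono => //; exact: sH_cst.
Qed.

Lemma sE_le_addr (X Y : Omega -> R) (c : R) :
  sH S X -> sH S Y -> (forall w, X w <= Y w + c) -> sE S X <= sE S Y + c.
Proof.
move=> HX HY le_XYc.
have HYc : sH S (fun w => Y w + c) by apply: sH_add => //; exact: sH_cst.
apply: le_trans (sE_mono HX HYc le_XYc) _.
by rewrite -{2}(sE_cst S c); apply: sE_subadd => //; exact: sH_cst.
Qed.

Lemma bounded_lipschitz_sE_section d1 d2 (Y : Omega -> 'rV[R]_d2)
    (phi : 'rV[R]_(d1 + d2) -> R) :
  random_vector S Y -> bounded_lipschitz phi ->
  bounded_lipschitz (fun x => sE S (fun w => phi (row_mx x (Y w)))).
Proof.
move=> HY phi_bl.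
have H x : sH S (fun w => phi (row_mx x (Y w))).
  exact: sH_comp HY (bounded_lipschitz_row_mxl x phi_bl).
case: phi_bl => [[M phi_bnd] [L phi_lip]]; split.
  exists M => x; rewrite ler_norml sE_le_cst ?sE_ge_cst // => w;
  by have := phi_bnd (row_mx x (Y w)); rewrite ler_norml => /andP[].
exists L => x y.
have dist_le w : `|phi (row_mx x (Y w)) - phi (row_mx y (Y w))| <= L * vnorm (x - y).
  apply: le_trans (phi_lip _ _) _.
  by rewrite opp_row_mx add_row_mx subrr vnorm_row_mx vnorm0 addr0.
rewrite ler_distl lerBlDr !sE_le_addr // => w;
by have := dist_le w; rewrite ler_distl lerBlDr => /andP[].
Qed.

End SublinearExpectation.

Section Independence.
Variables (R : realType) (Omega : Type) (S : sublinear_space R Omega).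

Lemma indep_lipschitz_map d1 d2 e1 e2 (X : Omega -> 'rV[R]_d1) (Y : Omega -> 'rV[R]_d2)
    (f : 'rV[R]_d1 -> 'rV[R]_e1) (g : 'rV[R]_d2 -> 'rV[R]_e2) :
  lipschitz_rV f -> lipschitz_rV g -> indep S X Y ->
  indep S (fun w => f (X w)) (fun w => g (Y w)).
Proof.
move=> Lf Lg XY phi phi_bl.
pose psi z := phi (row_mx (f (lsubmx z)) (g (rsubmx z))).
have psi_bl : bounded_lipschitz psi.
  apply: (bounded_lipschitz_comp phi_bl); apply: lipschitz_rV_row_mx.
    exact: lipschitz_rV_comp Lf (lipschitz_rV_lsubmx _ _ _).
  exact: lipschitz_rV_comp Lg (lipschitz_rV_rsubmx _ _ _).
have psiE x y : psi (row_mx x y) = phi (row_mx (f x) (g y)).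
  by rewrite /psi row_mxKl row_mxKr.
have := XY psi psi_bl; under eq_fun do rewrite psiE.
by under [in RHS]eq_fun do under eq_fun do rewrite psiE.
Qed.

Lemma indep_rvpairl_snd d1 d2 d3 (X : Omega -> 'rV[R]_d1) (Y : Omega -> 'rV[R]_d2)
    (Z : Omega -> 'rV[R]_d3) :
  indep S (rvpair X Y) Z -> indep S Y Z.
Proof.
move=> /(indep_lipschitz_map (lipschitz_rV_rsubmx _ _ _) (lipschitz_rV_id _ _)).
by under eq_fun do rewrite /rvpair row_mxKr.
Qed.

Lemma indep_rvpairr_fst d1 d2 d3 (X : Omega -> 'rV[R]_d1) (Y : Omega -> 'rV[R]_d2)
    (Z : Omega -> 'rV[R]_d3) :
  indep S X (rvpair Y Z) -> indep S X Y.
Proof.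
move=> /(indep_lipschitz_map (lipschitz_rV_id _ _) (lipschitz_rV_lsubmx _ _ _)).
by under [X in indep S _ X]eq_fun do rewrite /rvpair row_mxKl.
Qed.

Section IteratedIndependence.
Variables (d1 d2 d3 : nat) (X : Omega -> 'rV[R]_d1) (Y : Omega -> 'rV[R]_d2)
  (Z : Omega -> 'rV[R]_d3).

Definition iterated_indep :=
  forall phi : 'rV[R]_(d1 + d2 + d3) -> R, bounded_lipschitz phi ->
    sE S (fun w => phi (row_mx (row_mx (X w) (Y w)) (Z w))) =
    sE S (fun w => sE S (fun w' => sE S (fun w'' =>
      phi (row_mx (row_mx (X w) (Y w')) (Z w''))))).

Lemma iterated_indepE : iterated_indep <->
  forall psi : 'rV[R]_(d1 + (d2 + d3)) -> R, bounded_lipschitz psi ->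
    sE S (fun w => psi (row_mx (X w) (row_mx (Y w) (Z w)))) =
    sE S (fun w => sE S (fun w' => sE S (fun w'' =>
      psi (row_mx (X w) (row_mx (Y w') (Z w'')))))).
Proof.
split=> XYZ phi phi_bl.
  have := XYZ _ (bounded_lipschitz_comp phi_bl (lipschitz_rV_unassoc _ _ _ _)).
  under eq_fun do rewrite rV_unassocE.
  by under [in RHS]eq_fun do under eq_fun do under eq_fun do rewrite rV_unassocE.
have := XYZ _ (bounded_lipschitz_comp phi_bl (lipschitz_rV_assoc _ _ _ _)).
under eq_fun do rewrite rV_assocE.
by under [in RHS]eq_fun do under eq_fun do under eq_fun do rewrite rV_assocE.
Qed.

Lemma indep_rvpairl_iterated :
  random_vector S Z -> indep S X Y -> (indep S (rvpair X Y) Z <-> iterated_indep).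
Proof.
move=> HZ XY.
have XY_sE phi : bounded_lipschitz phi ->
    sE S (fun w => sE S (fun w'' => phi (row_mx (row_mx (X w) (Y w)) (Z w'')))) =
    sE S (fun w => sE S (fun w' => sE S (fun w'' =>
      phi (row_mx (row_mx (X w) (Y w')) (Z w''))))).
  move=> phi_bl; apply: (XY (fun v => sE S (fun w'' => phi (row_mx v (Z w''))))).
  exact: bounded_lipschitz_sE_section.
split=> XYZ phi phi_bl; first by rewrite XYZ // XY_sE.
by rewrite XYZ // -XY_sE.
Qed.

Lemma indep_rvpairr_iterated :
  indep S Y Z -> (indep S X (rvpair Y Z) <-> iterated_indep).
Proof.
move=> YZ.
have YZ_sE psi : bounded_lipschitz psi ->
    sE S (fun w => sE S (fun w' => psi (row_mx (X w) (row_mx (Y w') (Z w'))))) =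
    sE S (fun w => sE S (fun w' => sE S (fun w'' =>
      psi (row_mx (X w) (row_mx (Y w') (Z w'')))))).
  move=> psi_bl; congr (sE S _); apply: eq_fun => w.
  apply: (YZ (fun v => psi (row_mx (X w) v))); exact: bounded_lipschitz_row_mxl.
rewrite iterated_indepE.
split=> XYZ psi psi_bl; first by rewrite XYZ // YZ_sE.
by rewrite XYZ // -YZ_sE.
Qed.

End IteratedIndependence.

End Independence.

Unset Implicit Arguments.

Theorem mainTheorem19 (R : realType) (Omega : Type) (S : sublinear_space R Omega)
  (d1 d2 d3 d4 : nat) (X1 : Omega -> 'rV[R]_d1) (X2 : Omega -> 'rV[R]_d2)
  (X3 : Omega -> 'rV[R]_d3) (X4 : Omega -> 'rV[R]_d4) :
  random_vector S X1 -> random_vector S X2 ->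
  random_vector S X3 -> random_vector S X4 ->
  (indep_chain4 S X1 X2 X3 X4 <->
   [/\ indep S (rvpair X1 X2) (rvpair X3 X4), indep S X1 X2 & indep S X3 X4]).
Proof.
move=> _ _ _ HX4; split.
  case=> X1_X2 X12_X3 X123_X4.
  have X3_X4 := indep_rvpairl_snd X123_X4.
  split=> //; apply/(indep_rvpairr_iterated _ X3_X4).
  exact/(indep_rvpairl_iterated HX4 X12_X3).
case=> X12_X34 X1_X2 X3_X4.
have X12_X3 := indep_rvpairr_fst X12_X34.
split=> //; apply/(indep_rvpairl_iterated HX4 X12_X3).
exact/(indep_rvpairr_iterated _ X3_X4).
Qed.
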